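(* Let $M$ be a $d$-dimensional victim GNN whose embeddings $\mathbf{h}_i(G,X;M)$ are twice-differentiable in $X$ with bounded Hessian and satisfy $0<\underline{\alpha}_M\le\|\mathbf{h}_i\|\le\overline{\alpha}_M$ for all feasible $G,X,i$. Let $M'$ be a surrogate of $M$ with reconstruction error $\epsilon$ and transformation $\phi$, where $\phi(\mathbf{0})=\mathbf{0}$ and there are positive constants $c,C$ with $c\|\mathbf{v}_1-\mathbf{v}_2\|\le\|\phi(\mathbf{v}_1)-\phi(\mathbf{v}_2)\|\le C\|\mathbf{v}_1-\mathbf{v}_2\|$ for all $\mathbf{v}_1,\mathbf{v}_2\in\mathbb{R}^d$. Then for $\delta$ small enough and any such surrogate $M'$ with $\epsilon=o(\delta)$, $\beta_{M'}=O\big((C/c)^2\cdot\max(\epsilon/\delta,\delta)\big)$.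
   Context: A graph is $(G,X)$, $G=(V,E)$ with $n$ nodes, features $\mathbf{x}_i\in\mathbb{R}^D$, $X=(\mathbf{x}_1,\dots,\mathbf{x}_n)$; $\mathcal{D}$ is a distribution over feasible $(G,X)$. A $d$-dimensional GNN $F$ maps $(G,X)$ to node embeddings $\mathbf{h}_i(G,X;F)\in\mathbb{R}^d$. Surrogate: a $d'$-dimensional GNN $M'$ with embeddings $\mathbf{h}_i'$ is a surrogate of $M$ (with error $\epsilon$, transformation $\phi$) if there exist $\phi:\mathbb{R}^d\to\mathbb{R}^{d'}$ and a map $\hat{\mathbf{h}}$ assigning vectors $\hat{\mathbf{h}}_i(G,X)\in\mathbb{R}^d$ such that $\sup_{G,X,i}\|\hat{\mathbf{h}}_i(G,X)-\mathbf{h}_i(G,X;M)\|\le\epsilon$ and $\mathbf{h}_i'=\phi(\hat{\mathbf{h}}_i)$, for every graph that is feasible or within a $\delta$-neighborhood of a feasible graph. Query tuples: $\mathcal{Q}=\{(G,X,i,\mathbf{w}) : (G,X)\in\mathrm{supp}(\mathcal{D}), i\in\{1,\dots,n\},\|\mathbf{w}\|=1\}$. $\mathbf{h}_i^{(\tau\mathbf{w})}(G,X;F)$ is the embedding of node $i$ after replacing $\mathbf{x}_i$ by $\mathbf{x}_i+\tau\mathbf{w}$; $\nabla_{\mathbf{w}}\mathbf{h}_i=\lim_{\tau\to0}(\mathbf{h}_i^{(\tau\mathbf{w})}-\mathbf{h}_i)/\tau$; stationary points $\mathcal{S}(F)=\{t\in\mathcal{Q}:\|\nabla_{\mathbf{w}}\mathbf{h}_i(G,X;F)\|=0\}$.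 $\mu_M$ is a probability measure on $\mathcal{S}(M)$. $\mathcal{D}_{\exp}$: $(G,X)\sim\mathcal{D}$, $i$ uniform on $\{1,\dots,n\}$, $\mathbf{w}$ uniform on the unit sphere. For $t\in\mathcal{Q}$: $q_F(t)=\|\mathbf{h}_i^{(\delta\mathbf{w})}(G,X;F)-\mathbf{h}_i(G,X;F)\|/\|\mathbf{h}_i(G,X;F)\|$ and $\beta_F=\mathbb{E}_{t\sim\mu_M}q_F(t)/\mathbb{E}_{t\sim\mathcal{D}_{\exp}}q_F(t)$. *)

From HB Require Import structures.
From mathcomp Require Import all_boot all_order all_algebra.
From mathcomp Require Import all_classical all_reals all_analysis.
Set Implicit Arguments. Unset Strict Implicit. Unset Printing Implicit Defensive.
Import Order.TTheory GRing.Theory Num.Theory.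
Import numFieldNormedType.Exports.
Local Open Scope ring_scope.

Section GNNDefs.
Variable R : realType.

Definition enorm (k : nat) (v : 'rV[R]_k) : R :=
  Num.sqrt (\sum_(j < k) v 0 j ^+ 2).
Definition fnorm (m k : nat) (A : 'M[R]_(m, k)) : R :=
  Num.sqrt (\sum_(i < m) \sum_(j < k) A i j ^+ 2).

(* Graph structures: an abstract type [Gr] of graphs G = (V, E), each with
   [nn G] nodes; features X : 'M_(nn G, D) (row i is x_i). *)
Variables (Gr : Type) (nn : Gr -> nat) (D : nat).

Definition GNN (k : nat) := forall G : Gr, 'M[R]_(nn G, D) -> 'I_(nn G) -> 'rV[R]_k.

Definition pert (n : nat) (X : 'M[R]_(n, D)) (i : 'I_n) (tau : R) (w : 'rV[R]_D)
  : 'M[R]_(n, D) :=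
  \matrix_(k, j) (X k j + (if k == i then tau * w 0 j else 0)).

Record query := Query {
  qG : Gr; qX : 'M[R]_(nn qG, D); qi : 'I_(nn qG); qw : 'rV[R]_D }.

(* t is in Q (feasible = in the support of the graph distribution, unit w). *)
Definition in_Q (feas : forall G : Gr, 'M[R]_(nn G, D) -> Prop) (t : query) :=
  feas (qG t) (qX t) /\ enorm (qw t) = 1.

Definition grad (k : nat) (F : GNN k) (t : query) : 'rV[R]_k :=
  derive1 (fun tau : R => F (qG t) (pert (qX t) (qi t) tau (qw t)) (qi t)) 0.

Definition stationary feas (k : nat) (F : GNN k) (t : query) :=
  in_Q feas t /\ enorm (grad F t) = 0.

Definition qF (delta : R) (k : nat) (F : GNN k) (t : query) : R :=
  enorm (F (qG t) (pert (qX t) (qi t) delta (qw t)) (qi t) - F (qG t) (qX t) (qi t))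
  / enorm (F (qG t) (qX t) (qi t)).

Definition near_feas feas (delta : R) (G : Gr) (X : 'M[R]_(nn G, D)) :=
  exists X0 : 'M[R]_(nn G, D), feas G X0 /\ fnorm (X - X0) <= delta.

Definition surrogate feas (delta eps : R) (k k' : nat) (M : GNN k) (M' : GNN k')
  (phi : 'rV[R]_k -> 'rV[R]_k') :=
  exists hhat : GNN k, forall G (X : 'M[R]_(nn G, D)), near_feas feas delta X ->
    forall i, enorm (hhat G X i - M G X i) <= eps /\ M' G X i = phi (hhat G X i).

(* beta_F = E_{mu_M} q_F / E_{D_exp} q_F, where mu_M is the law of dec1 under mu
   and D_exp is the law of dec2 under P. *)
Definition beta (delta : R) (k : nat) (F : GNN k)
  (d1 : measure_display) (Q1 : measurableType d1) (mu : probability Q1 R)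
  (dec1 : Q1 -> query)
  (d2 : measure_display) (Q2 : measurableType d2) (P : probability Q2 R)
  (dec2 : Q2 -> query) : R :=
  fine (\int[mu]_t (qF delta F (dec1 t))%:E)%E
  / fine (\int[P]_t (qF delta F (dec2 t))%:E)%E.

(* h_i(G, X; M) is twice differentiable in X with bounded Hessian:
   Frechet differentiable in X, twice differentiable along every line
   X + tau V, with second directional derivatives bounded by H |V|_F^2. *)
Definition twice_diff_bdd_hessian (k : nat) (M : GNN k) :=
  (forall G (j : 'I_(nn G)) (X : 'M[R]_(nn G, D)),
     differentiable (fun Y : 'M[R]_(nn G, D) => M G Y j) X) /\
  exists H : R, forall G (X V : 'M[R]_(nn G, D)) (j : 'I_(nn G)),
    let g := fun tau : R => M G (X + tau *: V) j in
    (forall tau, derivable g tau 1 /\ derivable (derive1 g) tau 1) /\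
    (forall tau, enorm (derive1 (derive1 g) tau) <= H * fnorm V ^+ 2).

Definition bilipschitz (k k' : nat) (c C : R) (phi : 'rV[R]_k -> 'rV[R]_k') :=
  forall v1 v2 : 'rV[R]_k,
    c * enorm (v1 - v2) <= enorm (phi v1 - phi v2) <= C * enorm (v1 - v2).

End GNNDefs.

(* Taylor's theorem with the Hessian bound gives
   h_i(X + delta w) - h_i(X) = delta grad_w h_i + O(delta^2) uniformly over queries.
   The surrogate's embeddings are phi of vectors within eps of h_i, so phi(0) = 0 and
   the bi-Lipschitz bounds give
     (c/C) (delta |grad_w h_i| - O(delta^2) - 2 eps) / (|h_i| + eps)
       <= q_M'(t) <= (C/c) (delta |grad_w h_i| + O(delta^2) + 2 eps) / (|h_i| - eps).
   At stationary points the upper bound is O((C/c) (eps + delta^2)). Under D_exp,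
   |grad_w h_i| truncated at 1 has a finite positive mean gm, so the expected lower
   bound is of order (c/C) delta gm once eps = o(delta) and delta is small; the
   quotient beta_M' is therefore O((C/c)^2 (eps/delta + delta)). *)

From HB Require Import structures.
From mathcomp Require Import all_boot all_order all_algebra.
From mathcomp Require Import all_classical all_reals all_analysis.
From mathcomp Require Import ring lra measurable_realfun.
Import Order.TTheory GRing.Theory Num.Theory.
Import numFieldNormedType.Exports.
Local Open Scope classical_set_scope.
Local Open Scope ring_scope.

Section EuclideanNorm.
Context {R : realType} {k : nat}.
Implicit Types u v : 'rV[R]_k.

Lemma sumsq_ge0 v : 0 <= \sum_(j < k) v 0 j ^+ 2.
Proof. by apply: sumr_ge0 => j _; rewrite sqr_ge0. Qed.

Lemma enorm_ge0 v : 0 <= enorm v.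
Proof. exact: sqrtr_ge0. Qed.

Lemma enorm_sqr v : enorm v ^+ 2 = \sum_(j < k) v 0 j ^+ 2.
Proof. by rewrite /enorm sqr_sqrtr // sumsq_ge0. Qed.

Lemma enormZ (s : R) v : enorm (s *: v) = `|s| * enorm v.
Proof.
rewrite /enorm (eq_bigr (fun j => s ^+ 2 * v 0 j ^+ 2)); last first.
  by move=> j _; rewrite mxE exprMn.
by rewrite -mulr_sumr sqrtrM ?sqr_ge0 // sqrtr_sqr.
Qed.

Lemma enormN v : enorm (- v) = enorm v.
Proof. by rewrite -scaleN1r enormZ normrN normr1 mul1r. Qed.

Lemma enorm_distC u v : enorm (u - v) = enorm (v - u).
Proof. by rewrite -enormN opprB. Qed.

Lemma ler_coord_enorm v j : `|v 0 j| <= enorm v.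
Proof.
rewrite -sqrtr_sqr /enorm ler_sqrt ?sumsq_ge0 //.
by rewrite (bigD1 j) //= lerDl; apply: sumr_ge0 => i _; exact: sqr_ge0.
Qed.

Lemma ler_enorm_l1 v : enorm v <= \sum_(j < k) `|v 0 j|.
Proof.
rewrite -(ger0_norm (sumr_ge0 _ (fun j _ => normr_ge0 (v 0 j)))).
rewrite -sqrtr_sqr /enorm ler_sqrt ?sqr_ge0 //.
rewrite (eq_bigr (fun j => `|v 0 j| ^+ 2)) => [|j _]; last first.
  by rewrite real_normK ?num_real.
rewrite expr2 mulr_suml; apply: ler_sum => i _.
rewrite mulr_sumr (bigD1 i) //= lerDl.
by apply: sumr_ge0 => j _; rewrite mulr_ge0.
Qed.

Lemma enorm_eq0 v : enorm v = 0 -> forall j, v 0 j = 0.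
Proof.
move=> v0 j; apply/eqP; rewrite -normr_eq0 eq_le normr_ge0 andbT -v0.
exact: ler_coord_enorm.
Qed.

Lemma cauchy_schwarz_enorm u v :
  \sum_(j < k) u 0 j * v 0 j <= enorm u * enorm v.
Proof.
have [u0|u0] := eqVneq (enorm u) 0.
  by rewrite u0 mul0r big1 // => j _; rewrite (@enorm_eq0 u u0) mul0r.
have [v0|v0] := eqVneq (enorm v) 0.
  by rewrite v0 mulr0 big1 // => j _; rewrite (@enorm_eq0 v v0) mulr0.
have u_gt0 : 0 < enorm u by rewrite lt_def u0 enorm_ge0.
have v_gt0 : 0 < enorm v by rewrite lt_def v0 enorm_ge0.
set S := \sum_(j < k) u 0 j * v 0 j.
have sq_ge0 : 0 <= \sum_(j < k) (u 0 j * enorm v - v 0 j * enorm u) ^+ 2.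
  by apply: sumr_ge0 => j _; exact: sqr_ge0.
have sqE : \sum_(j < k) (u 0 j * enorm v - v 0 j * enorm u) ^+ 2
    = 2 * enorm u * enorm v * (enorm u * enorm v - S).
  transitivity (enorm v ^+ 2 * \sum_(j < k) u 0 j ^+ 2
    + enorm u ^+ 2 * \sum_(j < k) v 0 j ^+ 2 - 2 * enorm u * enorm v * S).
    by rewrite !mulr_sumr -big_split -sumrB /=; apply: eq_bigr => j _; ring.
  by rewrite -!enorm_sqr; ring.
by move: sq_ge0; rewrite sqE pmulr_rge0 ?subr_ge0 // !mulr_gt0.
Qed.

Lemma ler_enormD u v : enorm (u + v) <= enorm u + enorm v.
Proof.
rewrite -(ger0_norm (addr_ge0 (enorm_ge0 u) (enorm_ge0 v))) -sqrtr_sqr.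
rewrite {1}/enorm ler_sqrt ?sqr_ge0 //.
have -> : \sum_(j < k) (u + v) 0 j ^+ 2 = \sum_(j < k) u 0 j ^+ 2
    + \sum_(j < k) v 0 j ^+ 2 + 2 * \sum_(j < k) u 0 j * v 0 j.
  by rewrite mulr_sumr -!big_split /=; apply: eq_bigr => j _; rewrite mxE; ring.
by rewrite -!enorm_sqr; have := cauchy_schwarz_enorm u v; lra.
Qed.

Lemma ler_enorm_distD u v w : enorm (u - w) <= enorm (u - v) + enorm (v - w).
Proof. by rewrite (le_trans _ (ler_enormD _ _)) // addrA subrK. Qed.

Lemma enorm_dist_bounds u v r :
  enorm (u - v) <= r -> enorm v - r <= enorm u <= enorm v + r.
Proof.
move=> uv; have := ler_enorm_distD u v 0; have := ler_enorm_distD v u 0.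
by rewrite !subr0 enorm_distC; lra.
Qed.

Lemma enorm_dist_perturb {a b u v : 'rV[R]_k} {e} :
  enorm (a - u) <= e -> enorm (b - v) <= e ->
  enorm ((a - b) - (u - v)) <= 2 * e.
Proof.
move=> au bv; have := ler_enormD (a - u) (v - b).
have -> : a - u + (v - b) = a - b - (u - v).
  by rewrite opprB addrACA [RHS]addrACA [- u - b]addrC.
by rewrite [enorm (v - b)]enorm_distC; lra.
Qed.

End EuclideanNorm.

Section Taylor.
Context {R : realType}.

Lemma mvt_derive1 (f : R -> R) (a b : R) : a <= b ->
  (forall x, derivable f x 1) ->
  exists2 c, c \in `[a, b] & f b - f a = derive1 f c * (b - a).
Proof.
move=> ab df; apply: MVT_segment => // [x _|].
  by rewrite derive1E; exact: derivableP.
apply: continuous_subspaceT => x.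
exact/differentiable_continuous/derivable1_diffP.
Qed.

Lemma taylor2_le (f : R -> R) (B h : R) : 0 <= h ->
  (forall x, derivable f x 1) -> (forall x, derivable (derive1 f) x 1) ->
  (forall x, `|derive1 (derive1 f) x| <= B) ->
  `|f h - f 0 - h * derive1 f 0| <= B * h ^+ 2.
Proof.
move=> h0 df ddf f''B.
have [c c0h ->] := @mvt_derive1 f 0 h h0 df.
move: c0h; rewrite in_itv /= => /andP[c0 ch].
have [x _ f'E] := @mvt_derive1 (derive1 f) 0 c c0 ddf.
have B0 : 0 <= B := le_trans (normr_ge0 _) (f''B 0).
rewrite subr0 mulrC -mulrBr f'E subr0 normrM (ger0_norm h0) normrM (ger0_norm c0).
by rewrite expr2 [B * _]mulrCA; apply: ler_wpM2l => //; apply: ler_pM.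
Qed.

Lemma derive1_mx_coord (k : nat) (g : R -> 'rV[R]_k) (x : R) j :
  derivable g x 1 -> derive1 g x 0 j = derive1 (fun t => g t 0 j) x.
Proof. by move=> dg; rewrite !derive1E derive_mx // mxE. Qed.

Lemma taylor2_enorm_le (k : nat) (g : R -> 'rV[R]_k) (B h : R) : 0 <= h ->
  (forall x, derivable g x 1) -> (forall x, derivable (derive1 g) x 1) ->
  (forall x, enorm (derive1 (derive1 g) x) <= B) ->
  enorm (g h - g 0 - h *: derive1 g 0) <= k%:R * B * h ^+ 2.
Proof.
move=> h0 dg ddg g''B; apply: le_trans (ler_enorm_l1 _) _.
rewrite -mulrA mulr_natl -[k in _ *+ k]card_ord -sumr_const.
apply: ler_sum => j _.
pose f t := g t 0 j.
have f'E : derive1 f = fun t => derive1 g t 0 j.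
  by apply/funext => t; rewrite derive1_mx_coord.
have df x : derivable f x 1 by move/derivable_mxP: (dg x); apply.
have ddf x : derivable (derive1 f) x 1.
  by rewrite f'E; move/derivable_mxP: (ddg x); apply.
rewrite !mxE derive1_mx_coord //; apply: taylor2_le => // x.
rewrite f'E -derive1_mx_coord //.
exact: le_trans (ler_coord_enorm _ _) (g''B x).
Qed.

End Taylor.

Section Integrals.
Context {d : measure_display} {T : measurableType d} {R : realType}.
Local Open Scope ereal_scope.

(* q_F composed with a query sampler is not assumed measurable; monotonicity still
   holds since a nonnegative integral is a supremum over simple functions below. *)
Lemma ge0_le_integral_nonmeas (mu : measure T R) (f g : T -> \bar R) :
  (forall x, 0 <= f x) -> (forall x, f x <= g x) ->
  \int[mu]_x f x <= \int[mu]_x g x.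
Proof.
move=> f0 fg; have g0 x : 0 <= g x := le_trans (f0 x) (fg x).
rewrite !ge0_integralTE //.
apply: ereal_sup_le => _ [h /= hf <-]; exists h => //= x.
exact: le_trans (hf x) (fg x).
Qed.

Context {P : probability T R}.

Lemma integral_le_cst {f : T -> R} {b : R} : (forall x, 0 <= f x <= b)%R ->
  \int[P]_x (f x)%:E <= b%:E.
Proof.
move=> fb; apply: (@le_trans _ _ (\int[P]_x (cst b%:E) x)).
  by apply: ge0_le_integral_nonmeas => x; rewrite lee_fin; case/andP: (fb x).
by rewrite integral_cst // [X in _ * X](_ : _ = 1) ?mule1 //; exact: probability_setT.
Qed.

Lemma fine_integral_bounds {f : T -> R} {b : R} : (forall x, 0 <= f x <= b)%R ->
  (0 <= fine (\int[P]_x (f x)%:E) <= b)%R.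
Proof.
move=> fb; have I0 : 0 <= \int[P]_x (f x)%:E.
  by apply: integral_ge0 => x _; rewrite lee_fin; case/andP: (fb x).
have Ib := integral_le_cst fb.
have Ifin : \int[P]_x (f x)%:E \is a fin_num.
  by rewrite ge0_fin_numE // (le_lt_trans Ib) ?ltry.
by rewrite -!lee_fin fineK // I0 Ib.
Qed.

Lemma le_integral_affine_minorant (m q : T -> R) (a b : R) :
  measurable_fun setT m -> (forall x, 0 <= m x <= 1)%R ->
  (forall x, 0 <= q x)%R -> (forall x, a * m x - b <= q x)%R ->
  a%:E * \int[P]_x (m x)%:E - b%:E <= \int[P]_x (q x)%:E.
Proof.
move=> mm m01 q0 mq.
have im : P.-integrable setT (EFin \o m).
  apply: (@le_integrable _ _ _ _ _ _ _ (EFin \o cst 1%R)) => //.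
  - exact/measurable_EFinP.
  - by move=> x _ /=; rewrite lee_fin normr1 ger0_norm; case/andP: (m01 x).
  - exact: finite_measure_integrable_cst.
have iam : P.-integrable setT (EFin \o (fun x => a * m x)%R).
  apply: eq_integrable measurableT _ _ _ (integrableZl measurableT a im).
  by move=> x _ /=; rewrite EFinM.
have -> : a%:E * \int[P]_x (m x)%:E - b%:E = \int[P]_x (a * m x - b)%:E.
  under [RHS]eq_integral do rewrite EFinB.
  rewrite integralB_EFin //; last exact: finite_measure_integrable_cst.
  under [in RHS]eq_integral do rewrite EFinM.
  rewrite integralZl // integral_cst // [X in b%:E * X](_ : _ = 1) ?mule1 //.
  exact: probability_setT.
rewrite integralE; apply: le_trans (_ : \int[P]_x ((EFin \o _)^\+ x) <= _).
  by apply: geeDl; rewrite oppe_le0 integral_ge0 // => x _; exact: funeneg_ge0.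
apply: ge0_le_integral_nonmeas => x; first exact: funepos_ge0.
by rewrite funeposE /= ge_max !lee_fin q0 mq.
Qed.

Lemma integral_min1_gt0 {g : T -> R} : measurable_fun setT g ->
  (forall x, 0 <= g x)%R -> 0 < \int[P]_x (g x)%:E ->
  exists2 gm : R, (0 < gm <= 1)%R & \int[P]_x (Num.min (g x) 1)%:E = gm%:E.
Proof.
move=> mg g0 g_gt0.
have m01 x : (0 <= Num.min (g x) 1 <= 1)%R by rewrite le_min g0 ler01 ge_min lexx orbT.
have /andP[I0 I1] := fine_integral_bounds m01.
have Ifin : \int[P]_x (Num.min (g x) 1)%:E \is a fin_num.
  rewrite ge0_fin_numE ?(le_lt_trans (integral_le_cst m01)) ?ltry //.
  by apply: integral_ge0 => x _; rewrite lee_fin; case/andP: (m01 x).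
exists (fine (\int[P]_x (Num.min (g x) 1)%:E)); last by rewrite fineK.
rewrite I1 andbT lt_def I0 andbT; apply/negP => /eqP I_eq0.
(* min (g, 1) vanishes almost everywhere, hence so does g. *)
have mm : measurable_fun setT (fun x => Num.min (g x) 1%R).
  exact: measurable_minr mg (measurable_cst _).
have : \int[P]_x `|(EFin \o (fun x => Num.min (g x) 1%R)) x| = 0.
  rewrite -[RHS]/(0%:E) -I_eq0 fineK //; apply: eq_integral => x _ /=.
  by rewrite ger0_norm //; case/andP: (m01 x).
move/(ae_eq_integral_abs _ measurableT (iffRL (measurable_EFinP _ _) mm)).
move=> min_ae0; have g_ae0 : ae_eq P setT (EFin \o g) (cst 0).
  apply: filterS min_ae0 => x h Tx; move: (h Tx) => /= [] /eqP.
  by rewrite /Num.min; case: ifPn => [_ /eqP -> //|]; rewrite oner_eq0.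
move: g_gt0.
rewrite (@ae_eq_integral _ _ _ P setT (cst 0) (EFin \o g) measurableT _ _ g_ae0)
  ?integral0 ?ltxx //.
exact/measurable_EFinP.
Qed.

End Integrals.

(* [fine +oo = 0] and [x / 0 = 0]: an infinite denominator makes the quotient vanish. *)
Lemma ler_div_fine {R : realType} {x N Db : R} {I : \bar R} :
  0 <= x <= N -> 0 < Db -> (Db%:E <= I)%E -> x / fine I <= N / Db.
Proof.
move=> /andP[x0 xN] Db_gt0; case: I => [r| _ |] //=.
  rewrite lee_fin => Db_r; have r_gt0 := lt_le_trans Db_gt0 Db_r.
  apply: ler_pM => //; first by rewrite invr_ge0 ltW.
  by rewrite lef_pV2 ?posrE.
by rewrite invr0 mulr0 divr_ge0 ?(le_trans x0 xN) ?ltW.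
Qed.

Lemma cvg_at_right0_le {R : realType} {f : R -> R} {rho : R} : 0 < rho ->
  f x @[x --> 0^'+] --> 0 ->
  exists2 d1, 0 < d1 & forall x, 0 < x < d1 -> f x <= rho.
Proof.
move=> rho_gt0 /cvgr_dist_le /(_ rho rho_gt0).
rewrite near_withinE => /nbhs_ballP [d1 d1_gt0 near_f].
exists d1 => // x /andP[x_gt0 x_lt].
have /near_f /(_ x_gt0) : ball (0 : R) d1 x by rewrite /ball /= sub0r normrN gtr0_norm.
by rewrite sub0r normrN => /(le_trans (ler_norm _)).
Qed.

Section BiLipschitzQuotient.
Context {R : realType} {k k' : nat}.
Variables (phi : 'rV[R]_k -> 'rV[R]_k') (c C : R).
Hypotheses (c_gt0 : 0 < c) (C_gt0 : 0 < C) (phi0 : phi 0 = 0).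
Hypothesis phi_bilipschitz : bilipschitz c C phi.

Lemma enorm_phi_bounds v : c * enorm v <= enorm (phi v) <= C * enorm v.
Proof. by have := phi_bilipschitz v 0; rewrite phi0 !subr0. Qed.

Lemma phi_quot_le (a b : 'rV[R]_k) u v : enorm (a - b) <= u -> 0 < v <= enorm b ->
  enorm (phi a - phi b) / enorm (phi b) <= C * u / (c * v).
Proof.
move=> ab_u /andP[v_gt0 v_b]; have cv_gt0 : 0 < c * v by rewrite mulr_gt0.
have /andP[phib_ge _] := enorm_phi_bounds b.
have cv_le : c * v <= enorm (phi b) := le_trans (ler_wpM2l (ltW c_gt0) v_b) phib_ge.
have /andP[_ phiab_le] := phi_bilipschitz a b.
apply: ler_pM; rewrite ?invr_ge0 ?enorm_ge0 //.
  exact: le_trans phiab_le (ler_wpM2l (ltW C_gt0) ab_u).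
by rewrite lef_pV2 ?posrE // (lt_le_trans cv_gt0 cv_le).
Qed.

Lemma phi_quot_ge (a b : 'rV[R]_k) u w : u <= enorm (a - b) -> 0 < enorm b <= w ->
  c * u / (C * w) <= enorm (phi a - phi b) / enorm (phi b).
Proof.
move=> u_ab /andP[b_gt0 b_w].
have Cw_gt0 : 0 < C * w by rewrite mulr_gt0 // (lt_le_trans b_gt0 b_w).
have /andP[phib_ge phib_le] := enorm_phi_bounds b.
have phib_gt0 : 0 < enorm (phi b) by apply: lt_le_trans phib_ge; rewrite mulr_gt0.
have [u_le0|u_gt0] := leP u 0.
  apply: le_trans (_ : 0 <= _); last by rewrite divr_ge0 ?enorm_ge0.
  by rewrite pmulr_lle0 ?invr_gt0 // pmulr_rle0.
have /andP[phiab_ge _] := phi_bilipschitz a b.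
apply: ler_pM.
- by rewrite mulr_ge0 ?ltW.
- by rewrite invr_ge0 ltW.
- exact: le_trans (ler_wpM2l (ltW c_gt0) u_ab) phiab_ge.
- rewrite lef_pV2 ?posrE //.
  exact: le_trans phib_le (ler_wpM2l (ltW C_gt0) b_w).
Qed.

End BiLipschitzQuotient.

Section Embeddings.
Context {R : realType} {Gr : Type} {nn : Gr -> nat} {D : nat}.

Definition emb {k : nat} (F : GNN R nn D k) (t : query R nn D) : 'rV[R]_k :=
  F (qG t) (qX t) (qi t).

Definition emb_pert {k : nat} (F : GNN R nn D k) (tau : R) (t : query R nn D)
  : 'rV[R]_k := F (qG t) (pert (qX t) (qi t) tau (qw t)) (qi t).

Lemma qFE delta k (F : GNN R nn D k) t :
  qF delta F t = enorm (emb_pert F delta t - emb F t) / enorm (emb F t).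
Proof. by []. Qed.

Lemma qF_ge0 delta k (F : GNN R nn D k) t : 0 <= qF delta F t.
Proof. by rewrite divr_ge0 ?enorm_ge0. Qed.

Definition single_row {n} (i : 'I_n) (w : 'rV[R]_D) : 'M[R]_(n, D) :=
  \matrix_(l, j) (if l == i then w 0 j else 0).

Lemma pertE n (X : 'M[R]_(n, D)) i tau w : pert X i tau w = X + tau *: single_row i w.
Proof. by apply/matrixP => l j; rewrite !mxE; case: ifP; rewrite ?mulr0. Qed.

Lemma fnormZ n (s : R) (A : 'M[R]_(n, D)) : fnorm (s *: A) = `|s| * fnorm A.
Proof.
rewrite /fnorm (eq_bigr (fun i => s ^+ 2 * \sum_(j < D) A i j ^+ 2)) => [|i _].
  by rewrite -mulr_sumr sqrtrM ?sqr_ge0 // sqrtr_sqr.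
by rewrite mulr_sumr; apply: eq_bigr => j _; rewrite mxE exprMn.
Qed.

Lemma fnorm_single_row n (i : 'I_n) w : fnorm (single_row i w) = enorm w.
Proof.
rewrite /fnorm /enorm (bigD1 i) //= [X in _ + X]big1 ?addr0.
  by congr Num.sqrt; apply: eq_bigr => j _; rewrite mxE eqxx.
by move=> l /negbTE li; apply: big1 => j _; rewrite mxE li expr0n.
Qed.

Lemma near_feas_self {feas delta G} {X : 'M[R]_(nn G, D)} :
  feas G X -> 0 <= delta -> near_feas feas delta X.
Proof.
move=> fX delta0; exists X; split => //.
by rewrite subrr -(scale0r 0) fnormZ normr0 mul0r.
Qed.

Lemma near_feas_pert {feas delta G} {X : 'M[R]_(nn G, D)} i {w} :
  feas G X -> enorm w = 1 -> 0 <= delta -> near_feas feas delta (pert X i delta w).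
Proof.
move=> fX w1 delta0; exists X; split => //.
by rewrite pertE addrAC subrr add0r fnormZ fnorm_single_row w1 mulr1 ger0_norm.
Qed.

End Embeddings.

Section Surrogate.
Context {R : realType} {Gr : Type} {nn : Gr -> nat} {D d : nat}.
Context {M : GNN R nn D d} {H : R}.
Hypothesis M_hessian : forall G (X V : 'M[R]_(nn G, D)) (j : 'I_(nn G)),
  let g := fun tau : R => M G (X + tau *: V) j in
  (forall tau, derivable g tau 1 /\ derivable (derive1 g) tau 1) /\
  (forall tau, enorm (derive1 (derive1 g) tau) <= H * fnorm V ^+ 2).

Let K1 := d%:R * `|H|.

Lemma taylor2_emb {t delta} : enorm (qw t) = 1 -> 0 <= delta ->
  enorm (emb_pert M delta t - emb M t - delta *: grad M t) <= K1 * delta ^+ 2.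
Proof.
case: t => G X i w /= w1 delta0; rewrite /grad /emb_pert /emb /=.
have [g_der g''_le] := M_hessian G X (single_row i w) i.
set g := fun tau => M G (X + tau *: single_row i w) i.
have -> : (fun tau => M G (pert X i tau w) i) = g by apply/funext => tau; rewrite pertE.
have -> : M G X i = g 0 by rewrite /g scale0r addr0.
rewrite pertE -/(g delta) /K1.
apply: taylor2_enorm_le => // [x|x|x]; try by case: (g_der x).
apply: le_trans (g''_le x) _.
by rewrite fnorm_single_row w1 expr1n mulr1 ler_norm.
Qed.

Context {feas : forall G : Gr, 'M[R]_(nn G, D) -> Prop} {alo ahi : R}.
Hypothesis alo_gt0 : 0 < alo.
Hypothesis M_bounds :
  forall G (X : 'M[R]_(nn G, D)) i, feas G X -> alo <= enorm (M G X i) <= ahi.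

Context {delta e c C : R} {d' : nat} {phi : 'rV[R]_d -> 'rV[R]_d'}.
Context {M' : GNN R nn D d'} {hhat : GNN R nn D d}.
Hypotheses (delta_gt0 : 0 < delta) (e_le_alo : 2 * e <= alo).
Hypotheses (c_gt0 : 0 < c) (C_gt0 : 0 < C) (phi0 : phi 0 = 0).
Hypothesis phi_bilipschitz : bilipschitz c C phi.
Hypothesis hhat_surrogate : forall G (X : 'M[R]_(nn G, D)), near_feas feas delta X ->
  forall i, enorm (hhat G X i - M G X i) <= e /\ M' G X i = phi (hhat G X i).

Lemma surrogate_query_bounds {t} : in_Q feas t ->
  [/\ enorm (emb_pert hhat delta t - emb_pert M delta t) <= e,
      enorm (emb hhat t - emb M t) <= e,
      alo <= enorm (emb M t) <= ahi &
      qF delta M' t = enorm (phi (emb_pert hhat delta t) - phi (emb hhat t))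
                      / enorm (phi (emb hhat t))].
Proof.
case: t => G X i w [/= fX w1]; rewrite qFE /emb_pert /emb /=.
have [pert_err ->] := hhat_surrogate _ _ (near_feas_pert i fX w1 (ltW delta_gt0)) i.
have [err ->] := hhat_surrogate _ _ (near_feas_self fX (ltW delta_gt0)) i.
by split => //; exact: M_bounds.
Qed.

Lemma qF_stationary_le {t} : stationary feas M t ->
  qF delta M' t <= C * (K1 * delta ^+ 2 + 2 * e) / (c * (alo / 2)).
Proof.
move=> [Qt grad0]; have {}grad0 : enorm (delta *: grad M t) = 0.
  by rewrite enormZ grad0 mulr0.
have [pert_err err /andP[M_lo _] ->] := surrogate_query_bounds Qt.
apply: phi_quot_le => //.
  have /enorm_dist_bounds/andP[_ ab_le] := enorm_dist_perturb pert_err err.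
  have /enorm_dist_bounds/andP[_] := taylor2_emb (proj2 Qt) (ltW delta_gt0).
  by rewrite grad0 add0r => AB_le; apply: le_trans ab_le _; rewrite lerD2r.
have /enorm_dist_bounds/andP[b_ge _] := err.
have b_lo : alo / 2 <= enorm (emb hhat t).
  by apply: le_trans b_ge; have := e_le_alo; lra.
by rewrite b_lo divr_gt0.
Qed.

Lemma qF_in_Q_ge {t} : in_Q feas t ->
  c * (delta * enorm (grad M t) - K1 * delta ^+ 2 - 2 * e) / (C * (`|ahi| + alo))
  <= qF delta M' t.
Proof.
move=> Qt; have [pert_err err /andP[M_lo M_hi] ->] := surrogate_query_bounds Qt.
apply: phi_quot_ge => //.
  have /enorm_dist_bounds/andP[ab_ge _] := enorm_dist_perturb pert_err err.
  have /enorm_dist_bounds/andP[AB_ge _] := taylor2_emb (proj2 Qt) (ltW delta_gt0).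
  apply: le_trans ab_ge; rewrite lerD2r; apply: le_trans AB_ge.
  by rewrite enormZ gtr0_norm.
have /enorm_dist_bounds/andP[b_ge b_le] := err.
have := ler_norm ahi; have := e_le_alo; have := alo_gt0.
by move=> *; apply/andP; split; lra.
Qed.

Context {d1 : measure_display} {Q1 : measurableType d1} {mu : probability Q1 R}.
Context {d2 : measure_display} {Q2 : measurableType d2} {P : probability Q2 R}.
Context {dec1 : Q1 -> query R nn D} {dec2 : Q2 -> query R nn D}.

Let ahi_alo_gt0 : 0 < `|ahi| + alo. Proof. by rewrite ltr_wpDl. Qed.

Lemma integral_qF_stationary_bounds : (forall x, stationary feas M (dec1 x)) ->
  0 <= fine (\int[mu]_x (qF delta M' (dec1 x))%:E)
    <= C * (K1 * delta ^+ 2 + 2 * e) / (c * (alo / 2)).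
Proof.
move=> stat; apply: fine_integral_bounds => x.
by rewrite qF_ge0 (qF_stationary_le (stat x)).
Qed.

Lemma integral_qF_in_Q_ge {gm} : (forall x, in_Q feas (dec2 x)) ->
  measurable_fun setT (fun x => enorm (grad M (dec2 x))) ->
  (\int[P]_x (Num.min (enorm (grad M (dec2 x))) 1)%:E = gm%:E)%E ->
  ((c * (delta * gm - K1 * delta ^+ 2 - 2 * e) / (C * (`|ahi| + alo)))%:E
    <= \int[P]_x (qF delta M' (dec2 x))%:E)%E.
Proof.
move=> inQ grad_meas Egm; set kappa := c / (C * (`|ahi| + alo)).
have kappa_gt0 : 0 < kappa by rewrite /kappa divr_gt0 ?mulr_gt0.
have -> : c * (delta * gm - K1 * delta ^+ 2 - 2 * e) / (C * (`|ahi| + alo))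
    = kappa * delta * gm - kappa * (K1 * delta ^+ 2 + 2 * e) by rewrite /kappa; ring.
rewrite EFinB EFinM -Egm; apply: le_integral_affine_minorant => [|x|x|x].
- exact: measurable_minr grad_meas (measurable_cst _).
- by rewrite le_min enorm_ge0 ler01 ge_min lexx orbT.
- exact: qF_ge0.
apply: le_trans (qF_in_Q_ge (inQ x)).
have -> : c * (delta * enorm (grad M (dec2 x)) - K1 * delta ^+ 2 - 2 * e)
    / (C * (`|ahi| + alo)) = kappa * delta * enorm (grad M (dec2 x))
    - kappa * (K1 * delta ^+ 2 + 2 * e) by rewrite /kappa; ring.
rewrite lerD2r; apply: ler_wpM2l; first by rewrite mulr_ge0 ?ltW.
by rewrite ge_min lexx.
Qed.

Lemma beta_surrogate_le {gm} : (forall x, stationary feas M (dec1 x)) ->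
  (forall x, in_Q feas (dec2 x)) ->
  measurable_fun setT (fun x => enorm (grad M (dec2 x))) ->
  (\int[P]_x (Num.min (enorm (grad M (dec2 x))) 1)%:E = gm%:E)%E -> 0 < gm ->
  K1 * delta ^+ 2 + 2 * e <= delta * gm / 2 ->
  beta delta M' mu dec1 P dec2
    <= (C / c) ^+ 2 * (4 * (`|ahi| + alo) / (alo * gm)) * (K1 * delta + 2 * (e / delta)).
Proof.
move=> stat inQ grad_meas Egm gm_gt0 delta_small.
pose Db := c * (delta * gm / 2) / (C * (`|ahi| + alo)).
have Db_gt0 : 0 < Db by rewrite /Db !(divr_gt0, mulr_gt0).
have Db_le : (Db%:E <= \int[P]_x (qF delta M' (dec2 x))%:E)%E.
  apply: le_trans (integral_qF_in_Q_ge inQ grad_meas Egm); rewrite lee_fin.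
  rewrite ler_pM2r ?invr_gt0 ?mulr_gt0 // ler_pM2l //; lra.
have := ler_div_fine (integral_qF_stationary_bounds stat) Db_gt0 Db_le.
congr (_ <= _); rewrite /Db; field.
by rewrite !(gt_eqF, mulr_gt0, divr_gt0, ahi_alo_gt0, gm_gt0, c_gt0, C_gt0,
  delta_gt0, alo_gt0).
Qed.

End Surrogate.

Lemma small_delta_conditions {R : realType} {alo gm K1 delta e : R} :
  0 < alo -> gm <= 1 -> 0 <= K1 -> 0 < delta -> delta < gm / (4 * K1 + 4) ->
  e / delta <= Num.min (alo / 2) (gm / 8) ->
  2 * e <= alo /\ K1 * delta ^+ 2 + 2 * e <= delta * gm / 2.
Proof.
move=> alo_gt0 gm_le1 K1_ge0 delta_gt0.
rewrite ltr_pdivlMr ?ltr_wpDl ?mulr_ge0 // ler_pdivrMr // => delta_lt e_le.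
have e_alo : e <= alo / 2 * delta.
  apply: le_trans e_le _; apply: ler_wpM2r; [exact: ltW | by rewrite ge_min lexx].
have e_gm : e <= gm / 8 * delta.
  apply: le_trans e_le _; apply: ler_wpM2r; [exact: ltW | by rewrite ge_min lexx orbT].
have delta_le1 : delta <= 1 by nra.
split; first by nra.
rewrite expr2; nra.
Qed.

Theorem lemma3 (R : realType) (Gr : Type) (nn : Gr -> nat) (D d : nat)
  (feas : forall G : Gr, 'M[R]_(nn G, D) -> Prop)
  (M : GNN R nn D d)
  (d1 : measure_display) (Q1 : measurableType d1) (mu : probability Q1 R)
  (dec1 : Q1 -> query R nn D)
  (d2 : measure_display) (Q2 : measurableType d2) (P : probability Q2 R)
  (dec2 : Q2 -> query R nn D)
  (alo ahi : R) :
  twice_diff_bdd_hessian M ->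
  0 < alo ->
  (forall G (X : 'M[R]_(nn G, D)) (i : 'I_(nn G)), feas G X ->
     alo <= enorm (M G X i) <= ahi) ->
  (* mu_M is a probability measure on S(M) *)
  (forall t, stationary feas M (dec1 t)) ->
  (* D_exp is a probability measure on the query tuples Q *)
  (forall t, in_Q feas (dec2 t)) ->
  measurable_fun setT (fun t => enorm (grad M (dec2 t))) ->
  (0 < \int[P]_t (enorm (grad M (dec2 t)))%:E)%E ->
  exists K : R, 0 < K /\
  forall eps : R -> R,
    (forall delta, 0 <= eps delta) ->
    (eps x / x) @[x --> 0^'+] --> 0 ->
  exists delta0 : R, 0 < delta0 /\
  forall (delta c C : R) (d' : nat) (phi : 'rV[R]_d -> 'rV[R]_d')
         (M' : GNN R nn D d'),
    0 < delta < delta0 -> 0 < c -> 0 < C ->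
    phi 0 = 0 -> bilipschitz c C phi ->
    surrogate feas delta (eps delta) M M' phi ->
    beta delta M' mu dec1 P dec2
      <= K * (C / c) ^+ 2 * Num.max (eps delta / delta) delta.
Proof.
move=> [_ [H M_hessian]] alo_gt0 M_bounds stat inQ grad_meas grad_gt0.
have [gm /andP[gm_gt0 gm_le1] Egm] :=
  integral_min1_gt0 grad_meas (fun t => enorm_ge0 _) grad_gt0.
set K1 := d%:R * `|H|; have K1_ge0 : 0 <= K1 by rewrite mulr_ge0.
set Q := 4 * (`|ahi| + alo) / (alo * gm).
have Q_gt0 : 0 < Q by rewrite divr_gt0 ?mulr_gt0 // ltr_wpDl.
exists (Q * (K1 + 2)); split => [|eps _ eps_o].
  by rewrite mulr_gt0 // ltr_wpDl.
have rho_gt0 : 0 < Num.min (alo / 2) (gm / 8) by rewrite lt_min !divr_gt0.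
have [delta1 delta1_gt0 eps_small] := cvg_at_right0_le rho_gt0 eps_o.
exists (Num.min delta1 (gm / (4 * K1 + 4))); split => [|delta c C d' phi M'].
  by rewrite lt_min delta1_gt0 divr_gt0 // ltr_wpDl // mulr_ge0.
rewrite lt_min => /andP[delta_gt0 /andP[delta_lt1 delta_lt2]] c_gt0 C_gt0 phi0 phi_bl.
move=> [hhat hhat_surrogate].
have eps_rho : eps delta / delta <= Num.min (alo / 2) (gm / 8).
  by apply: eps_small; rewrite delta_gt0 delta_lt1.
have [e_le_alo delta_small] :=
  small_delta_conditions alo_gt0 gm_le1 K1_ge0 delta_gt0 delta_lt2 eps_rho.
apply: le_trans (beta_surrogate_le M_hessian alo_gt0 M_bounds delta_gt0
  e_le_alo c_gt0 C_gt0 phi0 phi_bl hhat_surrogate stat inQ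
  grad_meas Egm gm_gt0 delta_small) _.
set m := Num.max (eps delta / delta) delta.
have -> : Q * (K1 + 2) * (C / c) ^+ 2 * m = (C / c) ^+ 2 * Q * (K1 * m + 2 * m).
  by ring.
apply: ler_wpM2l; first by rewrite mulr_ge0 ?sqr_ge0 ?ltW.
by apply: lerD; apply: ler_wpM2l => //; rewrite le_max lexx ?orbT.
Qed.
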